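(* Let $q$ be a prime power. For arbitrary $u,v\in\mathbb{F}_q^3$, $|\widetilde{E}(u)\cap\widetilde{E}(v)|=(q-1)\,\rho_q(u,v)$.
   Context: $\mathbb{F}_q$ is the finite field with $q$ elements. Hamming distance $d(u,v)=|\{i:u_i\ne v_i\}|$ on $\mathbb{F}_q^3$; $B(u)=\{v:d(u,v)\le1\}$; $E(u)=\bigcup_{\lambda\in\mathbb{F}_q}B(\lambda u)$. $\mathcal{D}_q=\{(u_1,u_2,u_3)\in\mathbb{F}_q^3: u_1,u_2,u_3 \text{ pairwise distinct and nonzero}\}$, $\widetilde{B}(u)=B(u)\cap\mathcal{D}_q$, $\widetilde{E}(u)=E(u)\cap\mathcal{D}_q$. For $u,v\in\mathbb{F}_q^3$, $\rho_q(u,v)=0$ if $|\widetilde{E}(u)|=0$ or $|\widetilde{E}(v)|=0$, and otherwise $\rho_q(u,v)=\sum_{\mu\in\mathbb{F}_q^*}|\widetilde{B}(u)\cap\widetilde{B}(\mu v)|$. *)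

(* F_q is modelled as an arbitrary finite field F (q = #|F|,
   automatically a prime power); F_q^3 is 'rV[F]_3. *)
From HB Require Import structures.
From mathcomp Require Import all_boot all_order all_algebra.
Set Implicit Arguments. Unset Strict Implicit. Unset Printing Implicit Defensive.
Import GRing.Theory.
Local Open Scope ring_scope.

Section Defs.
Variable F : finFieldType.
Notation V := 'rV[F]_3.

Definition hdist (u v : V) : nat := #|[set i : 'I_3 | u ord0 i != v ord0 i]|.

Definition ball1 (u : V) : {set V} := [set v | (hdist u v <= 1)%N].

Definition Eset (u : V) : {set V} := \bigcup_(l : F) ball1 (l *: u).

Definition Dq : {set V} :=
  [set u : V | [forall i : 'I_3, u ord0 i != 0] &&
               [forall i : 'I_3, forall j : 'I_3, (i != j) ==> (u ord0 i != u ord0 j)]].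

Definition Bt (u : V) : {set V} := ball1 u :&: Dq.
Definition Et (u : V) : {set V} := Eset u :&: Dq.

Definition rho (u v : V) : nat :=
  if (#|Et u| == 0)%N || (#|Et v| == 0)%N then 0%N
  else (\sum_(mu : F | mu != 0%R) #|Bt u :&: Bt (mu *: v)|)%N.
End Defs.

From HB Require Import structures.
From mathcomp Require Import all_boot all_order all_algebra.
From mathcomp Require Import zify.
Set Implicit Arguments. Unset Strict Implicit. Unset Printing Implicit Defensive.
Import GRing.Theory.

(* E~(u) is the disjoint union of the sets B~(l u), l in F: two balls of
   radius 1 around l u and l' u share a coordinate, where l u_i = l' u_i is
   nonzero, forcing l = l'; and B~(0) is empty.  Hence |E~(u) ∩ E~(v)| is the
   sum over (l, m) of |B~(l u) ∩ B~(m v)|.  Only l, m <> 0 contribute, and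
   scaling by l^-1 (which preserves Hamming distance and D_q) shows that the
   (l, m) term equals the (1, m/l) term, so each of the q - 1 values of l
   contributes rho(u, v). *)

Section ScaledBalls.
Variable F : finFieldType.
Local Notation V := 'rV[F]_3.
Local Open Scope ring_scope.

Lemma hdistZ (l : F) (a b : V) : l != 0 -> hdist (l *: a) (l *: b) = hdist a b.
Proof.
move=> l_nz; apply: eq_card => i; rewrite !inE !mxE.
by rewrite (inj_eq (mulfI l_nz)).
Qed.

Lemma DqZ (l : F) (a : V) : l != 0 -> (l *: a \in Dq F) = (a \in Dq F).
Proof.
move=> l_nz; rewrite !inE; congr (_ && _).
  by apply: eq_forallb => i; rewrite mxE mulf_eq0 negb_or l_nz.
apply: eq_forallb => i; apply: eq_forallb => j.
by rewrite !mxE (inj_eq (mulfI l_nz)).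
Qed.

Lemma mem_BtZ (l : F) (a y : V) :
  l != 0 -> (l *: y \in Bt (l *: a)) = (y \in Bt a).
Proof. by move=> l_nz; rewrite !in_setI DqZ // !inE hdistZ. Qed.

Lemma Bt0 : Bt (0 : V) = set0.
Proof.
apply/setP => x; rewrite !inE; apply/negP => /andP[near_0 /andP[/forallP x_nz _]].
suff: hdist 0 x = 3%N by move=> d3; rewrite d3 in near_0.
rewrite /hdist -[RHS](card_ord 3) -cardsT; apply: eq_card => i.
by rewrite !inE mxE eq_sym x_nz.
Qed.

Lemma disjoint_BtZ (a : V) (l l' : F) :
  l != l' -> [disjoint Bt (l *: a) & Bt (l' *: a)].
Proof.
move=> neq_ll'; apply/pred0P => x /=.
rewrite !in_setI !inE; apply/negP.
move=> /andP[/andP[near_l /andP[/forallP x_nz _]] /andP[near_l' _]].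
rewrite /hdist in near_l near_l'.
set A := [set i | _ != _] in near_l; set B := [set i | _ != _] in near_l'.
have : ~~ ([set: 'I_3] \subset A :|: B).
  apply/negP => /subset_leq_card; rewrite cardsT card_ord => cover3.
  have := leq_trans cover3 (leq_card_setU A B).1.
  by lia.
case/subsetPn => i _; rewrite !inE negb_or !negbK !mxE.
move=> /andP[/eqP xi_l /eqP xi_l'].
have /eqP : (l - l') * a ord0 i = 0 by rewrite mulrBl xi_l xi_l' subrr.
rewrite mulf_eq0 subr_eq0 (negbTE neq_ll') /= => /eqP ai0.
by move: (x_nz i); rewrite -xi_l ai0 mulr0 eqxx.
Qed.

Lemma Et_indicator (a x : V) :
  nat_of_bool (x \in Et a) = (\sum_(l : F) nat_of_bool (x \in Bt (l *: a)))%N.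
Proof.
have Et_cover : (x \in Et a) = [exists l, x \in Bt (l *: a)].
  rewrite in_setI; apply/andP/existsP => [[/bigcupP[l _ x_near] x_D] | [l]].
    by exists l; rewrite in_setI x_near x_D.
  by rewrite in_setI => /andP[x_near ->]; split=> //; apply/bigcupP; exists l.
rewrite Et_cover; case: existsP => [[l0 x_l0] | no_l]; last first.
  by rewrite big1 // => l _; case: (boolP (x \in _)) => // x_l; case: no_l; exists l.
rewrite (bigD1 l0) //= x_l0 big1 // => l neq_l.
by rewrite (disjointFl (disjoint_BtZ a neq_l) x_l0).
Qed.

Lemma card_sum_indicator (A : {set V}) :
  #|A| = (\sum_x nat_of_bool (x \in A))%N.
Proof. by rewrite -sum1_card big_mkcond; apply: eq_bigr => x _; case: (x \in A). Qed.

Lemma card_EtI (u v : V) :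
  #|Et u :&: Et v| = (\sum_(l : F) \sum_(m : F) #|Bt (l *: u) :&: Bt (m *: v)|)%N.
Proof.
rewrite card_sum_indicator.
transitivity (\sum_x \sum_(l : F) \sum_(m : F)
      nat_of_bool (x \in Bt (l *: u)) * nat_of_bool (x \in Bt (m *: v)))%N.
  apply: eq_bigr => x _; rewrite in_setI -mulnb !Et_indicator big_distrl /=.
  by apply: eq_bigr => l _; rewrite big_distrr.
rewrite exchange_big; apply: eq_bigr => l _.
rewrite exchange_big; apply: eq_bigr => m _.
by rewrite card_sum_indicator; apply: eq_bigr => x _; rewrite [in RHS]in_setI mulnb.
Qed.

Lemma card_BtIZ (u v : V) (l m : F) : l != 0 ->
  #|Bt (l *: u) :&: Bt (m *: v)| = #|Bt u :&: Bt ((l^-1 * m) *: v)|.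
Proof.
move=> l_nz; rewrite -(card_preimset _ (GRing.scalerI l_nz)).
have -> : m *: v = l *: ((l^-1 * m) *: v) by rewrite scalerA mulrA divff ?mul1r.
by apply: eq_card => y; rewrite inE [LHS]in_setI !mem_BtZ // [RHS]in_setI.
Qed.

Lemma card_EtI_nonzero_scalars (u v : V) :
  #|Et u :&: Et v| =
  ((#|F| - 1) * \sum_(m : F | m != 0%R) #|Bt u :&: Bt (m *: v)|)%N.
Proof.
pose S l m := #|Bt (l *: u) :&: Bt (m *: v)|.
have S0l m : S 0 m = 0%N by rewrite /S scale0r Bt0 set0I cards0.
have S0r l : S l 0 = 0%N by rewrite /S scale0r Bt0 setI0 cards0.
have -> : #|Et u :&: Et v| = (\sum_l \sum_m S l m)%N := card_EtI u v.
rewrite (bigD1 0) //= big1 ?S0l // add0n.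
transitivity (\sum_(l : F | l != 0%R) \sum_(m : F) S 1%R m)%N.
  apply: eq_bigr => l l_nz.
  rewrite (eq_bigr (fun m => S 1 (l^-1 * m))) => [|m _]; last first.
    by rewrite /S card_BtIZ // scale1r.
  by rewrite [RHS](reindex_inj (mulfI (invr_neq0 l_nz))).
rewrite sum_nat_const cardC1 subn1 (bigD1 0) //= S0r add0n.
by congr (_ * _)%N; apply: eq_bigr => m _; rewrite /S scale1r.
Qed.

End ScaledBalls.

Theorem corollary10 (F : finFieldType) (u v : 'rV[F]_3) :
  #|Et u :&: Et v| = ((#|F| - 1) * rho u v)%N.
Proof.
rewrite /rho; case: ifP => [|_]; last exact: card_EtI_nonzero_scalars.
by case/orP => /eqP /cards0_eq ->; rewrite ?set0I ?setI0 cards0 muln0.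
Qed.
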